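(* Let $T\subset\mathbb{R}^3$ be the tetrahedron with vertices $(0,0,0)$, $\left(\frac12,0,0\right)$, $\left(0,2+\sqrt2,0\right)$ and $\left(0,0,2-\sqrt2\right)$. Then for every positive integer $t$, \[ \#(tT\cap\mathbb{Z}^3)=\frac16t^3+t^2+\frac{11}{6}t+1. \] *)

From Stdlib Require Export Reals ZArith List.
Export ListNotations.
Open Scope R_scope.

Definition pt := (R * R * R)%type.

Definition v0 : pt := (0, 0, 0).
Definition v1 : pt := (1/2, 0, 0).
Definition v2 : pt := (0, 2 + sqrt 2, 0).
Definition v3 : pt := (0, 0, 2 - sqrt 2).

Definition comb4 (l0 l1 l2 l3 : R) (a b c d : pt) : pt :=
  let '(a1,a2,a3) := a in let '(b1,b2,b3) := b in
  let '(c1,c2,c3) := c in let '(d1,d2,d3) := d in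
  (l0*a1 + l1*b1 + l2*c1 + l3*d1,
   l0*a2 + l1*b2 + l2*c2 + l3*d2,
   l0*a3 + l1*b3 + l2*c3 + l3*d3).

Definition in_T (p : pt) : Prop :=
  exists l0 l1 l2 l3 : R,
    0 <= l0 /\ 0 <= l1 /\ 0 <= l2 /\ 0 <= l3 /\ l0 + l1 + l2 + l3 = 1 /\
    p = comb4 l0 l1 l2 l3 v0 v1 v2 v3.

Definition in_dilate (t : R) (p : pt) : Prop :=
  exists q : pt, in_T q /\
    let '(q1,q2,q3) := q in p = (t*q1, t*q2, t*q3).

Definition Zpt (z : Z * Z * Z) : pt :=
  let '(a,b,c) := z in (IZR a, IZR b, IZR c).

Definition enumerates_lattice_points (t : R) (s : list (Z * Z * Z)) : Prop :=
  NoDup s /\ forall z, In z s <-> in_dilate t (Zpt z).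

From Stdlib Require Import Reals ZArith List Lia Lra Psatz FinFun.
Open Scope R_scope.

(* Clearing denominators, tT = {x, y, z >= 0 : 4x + (2 - sqrt 2) y + (2 + sqrt 2) z <= 2t}.
   Write (y, z) = (w + d^-, w + d^+) with w = min(y, z) and d = z - y: the left-hand side
   becomes 4x + 4w + c(d), where c(d) is (2 + sqrt 2) d for d >= 0 and (2 - sqrt 2) |d| for
   d < 0.  For n > 0 the number of d with c(d) <= 2n is
   1 + floor(n (2 - sqrt 2)) + floor(n (2 + sqrt 2)) = 4n, because the two reals sum to 4n and
   are irrational.  Summing over w gives (n + 1)^2 pairs (y, z) for the budget 2n, and summing
   over x gives (t + 1)(t + 2)(t + 3)/6 lattice points. *)

Lemma sqrt2_sqr : sqrt 2 * sqrt 2 = 2.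
Proof. apply sqrt_sqrt; lra. Qed.

Lemma sqrt2_bounds : 1 < sqrt 2 < 3/2.
Proof. pose proof sqrt2_sqr; pose proof (sqrt_pos 2); split; nra. Qed.

Lemma sqrt2_conj : (2 + sqrt 2) * (2 - sqrt 2) = 2.
Proof. pose proof sqrt2_sqr; lra. Qed.

Lemma nat_sqr_eq_double_sqr j n : (j * j = 2 * n * n)%nat -> n = 0%nat.
Proof.
  revert j; induction n as [n IH] using lt_wf_ind; intros j H.
  destruct (Nat.Even_or_Odd j) as [[a ->]|[a ->]]; [|lia].
  destruct (Nat.Even_or_Odd n) as [[c ->]|[c ->]]; [|lia].
  destruct c as [|c]; [lia|].
  enough (S c = 0%nat) by lia.
  apply (IH (S c) ltac:(lia) a); lia.
Qed.

Lemma INR_eq_mul_sqrt2 m n : INR m = INR n * sqrt 2 -> n = 0%nat.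
Proof.
  intros H; apply (nat_sqr_eq_double_sqr m n), INR_eq.
  rewrite !mult_INR, H.
  replace (INR n * sqrt 2 * (INR n * sqrt 2)) with (INR n * INR n * (sqrt 2 * sqrt 2))
    by ring.
  rewrite sqrt2_sqr; simpl; ring.
Qed.

Lemma nat_floor_exists a : 0 <= a -> exists p : nat, INR p <= a < INR p + 1.
Proof.
  intros Ha; destruct (base_Int_part a) as [H1 H2].
  assert (Hz : (0 <= Int_part a)%Z).
  { assert (-1 < Int_part a)%Z by (apply lt_IZR; lra). lia. }
  exists (Z.to_nat (Int_part a)); rewrite INR_IZR_INZ, Z2Nat.id by exact Hz; lra.
Qed.

Lemma INR_le_floor p e a : INR p <= a < INR p + 1 -> (INR e <= a <-> (e <= p)%nat).
Proof.
  intros [H1 H2]; split; intros H.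
  - assert (INR e < INR (S p)) by (rewrite S_INR; lra).
    apply INR_lt in H0; lia.
  - apply le_INR in H; lra.
Qed.

Lemma floor_conj_sum n p q :
  INR p <= INR n * (2 - sqrt 2) < INR p + 1 ->
  INR q <= INR n * (2 + sqrt 2) < INR q + 1 ->
  (p + q + 1 = if Nat.eqb n 0 then 1 else 4 * n)%nat.
Proof.
  intros Hp Hq; pose proof sqrt2_bounds.
  destruct (Nat.eqb_spec n 0) as [->|Hn].
  - simpl in Hp, Hq.
    assert (INR p < INR 1 /\ INR q < INR 1) as [Hp1 Hq1] by (simpl; lra).
    apply INR_lt in Hp1, Hq1; lia.
  - assert (Hle : (p + q <= 4 * n)%nat).
    { apply INR_le; rewrite plus_INR, mult_INR; simpl; lra. }
    assert (Hlt : (4 * n < p + q + 2)%nat).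
    { apply INR_lt; rewrite !plus_INR, mult_INR; simpl; lra. }
    enough (p + q <> 4 * n)%nat by lia.
    intros Hsum.
    assert (Hp2 : (p <= 2 * n)%nat)
      by (apply INR_le; rewrite mult_INR; simpl; pose proof (pos_INR n); nra).
    apply Hn, (INR_eq_mul_sqrt2 (2 * n - p)).
    assert (INR p + INR q = 4 * INR n) by (rewrite <- plus_INR, Hsum, mult_INR; simpl; lra).
    rewrite minus_INR by exact Hp2; rewrite mult_INR; simpl; lra.
Qed.

Lemma le_mul_conj_iff u v e n :
  0 < u -> 0 < v -> u * v = 2 -> (u * e <= 2 * n <-> e <= n * v).
Proof.
  intros Hu Hv Huv; split; intros H.
  - apply (Rmult_le_reg_l u); [exact Hu|].
    replace (u * (n * v)) with (2 * n) by (rewrite <- Huv; ring); exact H.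
  - replace (2 * n) with (u * (n * v)) by (rewrite <- Huv; ring).
    apply Rmult_le_compat_l; lra.
Qed.

(* The index k encodes d = k - N; truncated subtraction splits d into d^- and d^+. *)
Definition cost (N k : nat) : R := (2 - sqrt 2) * INR (N - k) + (2 + sqrt 2) * INR (k - N).

Lemma cost_nonneg N k : 0 <= cost N k.
Proof.
  unfold cost; pose proof sqrt2_bounds; pose proof (pos_INR (N - k));
  pose proof (pos_INR (k - N)); nra.
Qed.

Lemma cost_le_iff N n p q k :
  INR p <= INR n * (2 - sqrt 2) < INR p + 1 ->
  INR q <= INR n * (2 + sqrt 2) < INR q + 1 ->
  (cost N k <= 2 * INR n <-> (N - q <= k <= N + p)%nat).
Proof.
  intros Hp Hq; pose proof sqrt2_bounds; unfold cost.
  destruct (Nat.le_gt_cases N k).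
  - replace (N - k)%nat with 0%nat by lia; rewrite INR_0, Rmult_0_r, Rplus_0_l.
    rewrite (le_mul_conj_iff (2 + sqrt 2) (2 - sqrt 2)) by (lra || apply sqrt2_conj).
    rewrite (INR_le_floor p) by exact Hp; lia.
  - replace (k - N)%nat with 0%nat by lia; rewrite INR_0, Rmult_0_r, Rplus_0_r.
    rewrite (le_mul_conj_iff (2 - sqrt 2) (2 + sqrt 2))
      by (lra || (rewrite Rmult_comm; apply sqrt2_conj)).
    rewrite (INR_le_floor q) by exact Hq; lia.
Qed.

Fixpoint lsum {A} (f : A -> nat) (l : list A) : nat :=
  match l with nil => 0%nat | a :: l => (f a + lsum f l)%nat end.

Lemma lsum_app {A} (f : A -> nat) l1 l2 : lsum f (l1 ++ l2) = (lsum f l1 + lsum f l2)%nat.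
Proof. induction l1; simpl; lia. Qed.

Lemma lsum_ext {A} (f g : A -> nat) l :
  (forall a, In a l -> f a = g a) -> lsum f l = lsum g l.
Proof. induction l; simpl; intros H; [reflexivity|]; rewrite H, IHl; auto. Qed.

Lemma lsum_map {A B} (f : B -> nat) (g : A -> B) l :
  lsum f (map g l) = lsum (fun a => f (g a)) l.
Proof. induction l; simpl; lia. Qed.

Lemma lsum_prod {A B} (f : A * B -> nat) l1 l2 :
  lsum f (list_prod l1 l2) = lsum (fun a => lsum (fun b => f (a, b)) l2) l1.
Proof. induction l1; simpl; [reflexivity|]; rewrite lsum_app, lsum_map, IHl1; reflexivity. Qed.

Lemma lsum_seqS f n : lsum f (seq 0 (S n)) = (lsum f (seq 0 n) + f n)%nat.
Proof. rewrite seq_S, lsum_app; simpl; lia. Qed.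

Lemma lsum_seq_shift f n :
  lsum f (seq 0 (S n)) = (f 0%nat + lsum (fun k => f (S k)) (seq 0 n))%nat.
Proof. simpl; rewrite <- seq_shift, lsum_map; reflexivity. Qed.

Lemma length_filter_lsum {A} (g : A -> bool) l :
  length (filter g l) = lsum (fun a => Nat.b2n (g a)) l.
Proof. induction l; simpl; [reflexivity|]; destruct (g a); simpl; lia. Qed.

Lemma lsum_indicator_interval (f : nat -> nat) lo hi n :
  (forall k, (k < n)%nat -> f k = Nat.b2n ((lo <=? k) && (k <=? hi))) ->
  lsum f (seq 0 n) = (Nat.min n (S hi) - lo)%nat.
Proof.
  induction n as [|n IH]; intros Hf; [simpl; lia|].
  rewrite lsum_seqS, IH, (Hf n) by (lia || (intros; apply Hf; lia)).
  destruct (Nat.leb_spec lo n), (Nat.leb_spec n hi); cbn [Nat.b2n andb]; lia.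
Qed.

Lemma NoDup_list_prod {A B} (l1 : list A) (l2 : list B) :
  NoDup l1 -> NoDup l2 -> NoDup (list_prod l1 l2).
Proof.
  induction 1 as [|a l1 Ha H1 IH]; intros H2; simpl; [constructor|].
  apply NoDup_app; auto.
  - apply Injective_map_NoDup; auto; intros x y E; now inversion E.
  - intros [x y] Hin Hin2; apply in_map_iff in Hin as [b [E _]]; inversion E; subst.
    apply in_prod_iff in Hin2 as [Hx _]; contradiction.
Qed.

Definition Rleb (a b : R) : bool := if Rle_dec a b then true else false.

Lemma Rleb_ext a b c d : (a <= b <-> c <= d) -> Rleb a b = Rleb c d.
Proof. intros H; unfold Rleb; destruct (Rle_dec a b), (Rle_dec c d); tauto. Qed.

Lemma Rleb_false a b : b < a -> Rleb a b = false.
Proof. intros; unfold Rleb; destruct (Rle_dec a b); [lra|reflexivity]. Qed.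

Definition cost_count (N : nat) (r : R) : nat :=
  lsum (fun k => Nat.b2n (Rleb (cost N k) r)) (seq 0 (2 * N + 1)).

Definition layer_sum (N : nat) (f : R -> nat) (r : R) : nat :=
  lsum (fun w => f (r - 4 * INR w)) (seq 0 N).

Definition pair_count (N : nat) : R -> nat := layer_sum N (cost_count N).

Definition triple_count (N : nat) : R -> nat := layer_sum N (pair_count N).

Lemma cost_count_neg N r : r < 0 -> cost_count N r = 0%nat.
Proof.
  intros Hr; unfold cost_count.
  rewrite (lsum_ext _ (fun _ => 0%nat)).
  - induction (seq 0 (2 * N + 1)); simpl; auto.
  - intros k _; rewrite Rleb_false; [reflexivity|]; pose proof (cost_nonneg N k); lra.
Qed.

Lemma cost_count_even N n : (4 * n <= N)%nat ->
  cost_count N (2 * INR n) = (if Nat.eqb n 0 then 1 else 4 * n)%nat.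
Proof.
  intros Hn; pose proof sqrt2_bounds as Hs; pose proof (pos_INR n) as Hn0.
  destruct (nat_floor_exists (INR n * (2 - sqrt 2))) as [p Hp]; [nra|].
  destruct (nat_floor_exists (INR n * (2 + sqrt 2))) as [q Hq]; [nra|].
  pose proof (floor_conj_sum n p q Hp Hq) as Hpq.
  assert (Hpq4 : (p + q <= 4 * n)%nat) by (destruct (Nat.eqb n 0); lia).
  rewrite <- Hpq; unfold cost_count.
  rewrite (lsum_indicator_interval _ (N - q) (N + p)); [lia|].
  intros k _; unfold Rleb.
  destruct (Rle_dec (cost N k) (2 * INR n)) as [Hk|Hk];
    rewrite (cost_le_iff N n p q k Hp Hq) in Hk;
    destruct (Nat.leb_spec (N - q) k), (Nat.leb_spec k (N + p)); cbn [Nat.b2n andb]; lia.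
Qed.

Lemma layer_sum_neg N f r :
  (forall s, s < 0 -> f s = 0%nat) -> r < 0 -> layer_sum N f r = 0%nat.
Proof.
  intros Hf Hr; unfold layer_sum.
  rewrite (lsum_ext _ (fun _ => 0%nat)).
  - induction (seq 0 N); simpl; auto.
  - intros w _; apply Hf; pose proof (pos_INR w); lra.
Qed.

(* Peeling off the layer w = 0 shifts the budget by 4; the top layer is empty since r < 4N. *)
Lemma layer_sum_step N f r :
  (forall s, s < 0 -> f s = 0%nat) -> r < 4 * INR N ->
  layer_sum N f r = (f r + layer_sum N f (r - 4))%nat.
Proof.
  intros Hf Hr; unfold layer_sum.
  destruct N as [|N]; [simpl in *; rewrite Hf by lra; reflexivity|].
  rewrite lsum_seq_shift, lsum_seqS, (Hf (r - 4 - 4 * INR N)) by (rewrite S_INR in Hr; lra).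
  replace (r - 4 * INR 0) with r by (simpl; ring).
  rewrite (lsum_ext _ (fun w => f (r - 4 - 4 * INR w))); [lia|].
  intros w _; f_equal; rewrite S_INR; ring.
Qed.

Lemma pair_count_neg N r : r < 0 -> pair_count N r = 0%nat.
Proof. apply layer_sum_neg, cost_count_neg. Qed.

Lemma budget_lt N n : (4 * n < N)%nat -> 2 * INR n < 4 * INR N.
Proof. intros H; apply lt_INR in H; rewrite mult_INR in H; simpl in H; pose proof (pos_INR n); lra. Qed.

Lemma budget_pred m : 2 * INR (S (S m)) - 4 = 2 * INR m.
Proof. rewrite !S_INR; ring. Qed.

Lemma pair_count_even N n : (4 * n < N)%nat ->
  pair_count N (2 * INR n) = ((n + 1) * (n + 1))%nat.
Proof.
  induction n as [n IH] using lt_wf_ind; intros Hn.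
  unfold pair_count; rewrite layer_sum_step
    by (apply cost_count_neg || apply budget_lt; assumption).
  fold (pair_count N); rewrite cost_count_even by lia.
  destruct n as [|[|m]].
  - rewrite pair_count_neg by (simpl; lra); reflexivity.
  - rewrite pair_count_neg by (simpl; lra); reflexivity.
  - rewrite budget_pred, IH by lia; simpl Nat.eqb; cbv iota; nia.
Qed.

Lemma triple_count_even N n : (4 * n < N)%nat ->
  (6 * triple_count N (2 * INR n) = (n + 1) * (n + 2) * (n + 3))%nat.
Proof.
  induction n as [n IH] using lt_wf_ind; intros Hn.
  unfold triple_count; rewrite layer_sum_step
    by (apply pair_count_neg || apply budget_lt; assumption).
  fold (triple_count N); rewrite pair_count_even by exact Hn.
  destruct n as [|[|m]].
  1, 2: unfold triple_count;
    rewrite layer_sum_neg by (apply pair_count_neg || (simpl; lra)); reflexivity.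
  - rewrite budget_pred; specialize (IH m ltac:(lia) ltac:(lia)); nia.
Qed.

Lemma in_dilate_iff (t X Y Z : R) : 0 < t ->
  (in_dilate t (X, Y, Z) <->
   0 <= X /\ 0 <= Y /\ 0 <= Z /\ 4 * X + (2 - sqrt 2) * Y + (2 + sqrt 2) * Z <= 2 * t).
Proof.
  intros Ht; pose proof sqrt2_bounds; pose proof sqrt2_sqr as Hsq; split.
  - intros [[[q1 q2] q3] [[l0 [l1 [l2 [l3 [H0 [H1 [H2 [H3 [Hsum Hq]]]]]]]]] Hp]].
    unfold comb4, v0, v1, v2, v3 in Hq; injection Hq as -> -> ->; injection Hp as -> -> ->.
    repeat split; try (apply Rmult_le_pos; nra).
    replace (4 * (t * (l0 * 0 + l1 * (1 / 2) + l2 * 0 + l3 * 0)) +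
      (2 - sqrt 2) * (t * (l0 * 0 + l1 * 0 + l2 * (2 + sqrt 2) + l3 * 0)) +
      (2 + sqrt 2) * (t * (l0 * 0 + l1 * 0 + l2 * 0 + l3 * (2 - sqrt 2))))
      with (2 * t * l1 + t * (l2 + l3) * (4 - sqrt 2 * sqrt 2)) by field.
    rewrite Hsq; nra.
  - intros [HX [HY [HZ HL]]].
    set (S := 4 * X + (2 - sqrt 2) * Y + (2 + sqrt 2) * Z) in HL.
    exists (X / t, Y / t, Z / t); split; [|simpl; f_equal; [f_equal|]; field; lra].
    exists (1 - S / (2 * t)), (2 * X / t), (Y * (2 - sqrt 2) / (2 * t)),
      (Z * (2 + sqrt 2) / (2 * t)).
    assert (HS : S / (2 * t) <= 1).
    { apply (Rmult_le_reg_r (2 * t)); [lra|]; unfold Rdiv.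
      rewrite Rmult_assoc, Rinv_l, Rmult_1_r by lra; lra. }
    assert (Hti : 0 < / t) by (apply Rinv_0_lt_compat; lra).
    assert (Hti2 : 0 < / (2 * t)) by (apply Rinv_0_lt_compat; lra).
    repeat split; unfold Rdiv; try (repeat apply Rmult_le_pos; lra).
    + unfold S; field; lra.
    + unfold comb4, v0, v1, v2, v3; f_equal; [f_equal|].
      * field; lra.
      * replace (Y * (2 - sqrt 2) * / (2 * t) * (2 + sqrt 2))
          with (Y * (4 - sqrt 2 * sqrt 2) / (2 * t)) by (field; lra).
        rewrite Hsq; field; lra.
      * replace (Z * (2 + sqrt 2) * / (2 * t) * (2 - sqrt 2))
          with (Z * (4 - sqrt 2 * sqrt 2) / (2 * t)) by (field; lra).
        rewrite Hsq; field; lra.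
Qed.

Definition decode (N : nat) (p : nat * nat * nat) : Z * Z * Z :=
  let '(x, w, k) := p in (Z.of_nat x, Z.of_nat (w + (N - k)), Z.of_nat (w + (k - N))).

Definition within_budget (t N : nat) (p : nat * nat * nat) : bool :=
  let '(x, w, k) := p in Rleb (4 * INR x + 4 * INR w + cost N k) (2 * INR t).

Definition index_box (N : nat) : list (nat * nat * nat) :=
  list_prod (list_prod (seq 0 N) (seq 0 N)) (seq 0 (2 * N + 1)).

Definition lattice_list (t : nat) : list (Z * Z * Z) :=
  map (decode (4 * t + 4)) (filter (within_budget t (4 * t + 4)) (index_box (4 * t + 4))).

Lemma decode_form N x w k :
  4 * INR x + (2 - sqrt 2) * INR (w + (N - k)) + (2 + sqrt 2) * INR (w + (k - N)) =
  4 * INR x + 4 * INR w + cost N k.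
Proof. unfold cost; rewrite !plus_INR; ring. Qed.

Lemma Zpt_decode N x w k :
  Zpt (decode N (x, w, k)) = (INR x, INR (w + (N - k)), INR (w + (k - N))).
Proof. simpl; rewrite <- !INR_IZR_INZ; reflexivity. Qed.

Lemma lattice_list_NoDup t : NoDup (lattice_list t).
Proof.
  apply Injective_map_NoDup.
  - intros [[x w] k] [[x' w'] k'] H; injection H as H1 H2 H3; f_equal; [f_equal|]; lia.
  - apply NoDup_filter, NoDup_list_prod; [apply NoDup_list_prod|]; apply seq_NoDup.
Qed.

Lemma lattice_list_sound t z : (0 < t)%nat -> In z (lattice_list t) -> in_dilate (INR t) (Zpt z).
Proof.
  intros Ht Hin; apply in_map_iff in Hin as [[[x w] k] [<- Hin]].
  apply filter_In in Hin as [_ Hb]; unfold within_budget, Rleb in Hb.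
  destruct (Rle_dec _ _) as [HL|]; [|discriminate].
  rewrite Zpt_decode; apply in_dilate_iff; [apply lt_0_INR; exact Ht|].
  rewrite decode_form; repeat split; try apply pos_INR; exact HL.
Qed.

Lemma lattice_list_complete t a b c : (0 < t)%nat ->
  in_dilate (INR t) (Zpt (a, b, c)) -> In (a, b, c) (lattice_list t).
Proof.
  intros Ht H; pose proof sqrt2_bounds.
  apply in_dilate_iff in H as [Ha [Hb [Hc HL]]]; [|apply lt_0_INR; exact Ht].
  apply le_IZR in Ha, Hb, Hc.
  destruct (Z_of_nat_complete a Ha) as [x ->], (Z_of_nat_complete b Hb) as [y ->],
    (Z_of_nat_complete c Hc) as [z ->].
  rewrite <- !INR_IZR_INZ in HL.
  pose proof (pos_INR x); pose proof (pos_INR y); pose proof (pos_INR z).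
  assert (Hxt : (x <= t)%nat) by (apply INR_le; nra).
  assert (Hyt : (y <= 4 * t)%nat) by (apply INR_le; rewrite mult_INR; simpl; nra).
  assert (Hzt : (z <= t)%nat) by (apply INR_le; nra).
  unfold lattice_list; remember (4 * t + 4)%nat as N eqn:HN.
  assert (Hy : (Nat.min y z + (N - (N + z - y)) = y)%nat) by lia.
  assert (Hz : (Nat.min y z + ((N + z - y) - N) = z)%nat) by lia.
  apply in_map_iff; exists (x, Nat.min y z, N + z - y)%nat; split.
  - simpl; rewrite Hy, Hz; reflexivity.
  - apply filter_In; split.
    + apply in_prod_iff; split; [apply in_prod_iff; split|]; apply in_seq; lia.
    + unfold within_budget, Rleb; destruct (Rle_dec _ _) as [|HNo]; [reflexivity|].
      exfalso; apply HNo; rewrite <- decode_form, Hy, Hz; exact HL.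
Qed.

Lemma lattice_list_enumerates t : (0 < t)%nat ->
  enumerates_lattice_points (INR t) (lattice_list t).
Proof.
  intros Ht; split; [apply lattice_list_NoDup|].
  intros [[a b] c]; split; [apply lattice_list_sound, Ht | apply lattice_list_complete, Ht].
Qed.

Lemma length_lattice_list t :
  length (lattice_list t) = triple_count (4 * t + 4) (2 * INR t).
Proof.
  unfold lattice_list, index_box, triple_count, pair_count, layer_sum, cost_count.
  rewrite length_map, length_filter_lsum, !lsum_prod.
  apply lsum_ext; intros x _; apply lsum_ext; intros w _; apply lsum_ext; intros k _.
  f_equal; apply Rleb_ext; lra.
Qed.

Theorem proposition3p4 : forall t : nat, (0 < t)%nat ->
  exists s : list (Z * Z * Z),
    enumerates_lattice_points (INR t) s /\
    INR (length s) = /6 * INR t ^ 3 + INR t ^ 2 + 11/6 * INR t + 1.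
Proof.
  intros t Ht; exists (lattice_list t); split; [apply lattice_list_enumerates, Ht|].
  rewrite length_lattice_list.
  pose proof (triple_count_even (4 * t + 4) t ltac:(lia)) as Hcount.
  set (L := triple_count (4 * t + 4) (2 * INR t)) in *.
  apply (f_equal INR) in Hcount; rewrite !mult_INR, !plus_INR in Hcount; simpl in Hcount.
  lra.
Qed.
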